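(* Consider the robot rendezvous system $$\dot{x}_k(t)=x_{k-1}(t)-x_k(t),\quad k\in\mathbb{Z},\ t\ge0,$$ with a good initial constellation $x_0=(x_k(0))_{k\in\mathbb{Z}}\in\ell^\infty(\mathbb{Z})$. Suppose there is $c\in\mathbb{C}$ such that $$\sup_{k\in\mathbb{Z}}\bigg|\frac{1}{n}\sum_{j=1}^n x_{k-j}(0)-c\bigg|=O(n^{-1})\quad\text{as } n\to\infty.$$ Then $\sup_{k\in\mathbb{Z}}|x_k(t)-c|=O(t^{-1/2})$ as $t\to\infty$.
   Context: $\ell^\infty(\mathbb{Z})$ is the Banach space of bounded doubly infinite complex sequences with the supremum norm. $S$ denotes the right-shift operator on $\ell^\infty(\mathbb{Z})$, $S(x_k)=(x_{k-1})$. For $x_0\in\ell^\infty(\mathbb{Z})$, the solution of the system is $x(t)=(x_k(t))_{k\in\mathbb{Z}}=\exp(t(S-I))x_0$, $t\ge0$. An initial constellation $x_0\in\ell^\infty(\mathbb{Z})$ is called good if there exist constants $c_k\in\mathbb{C}$, $k\in\mathbb{Z}$, such that the corresponding solution satisfies $\sup_{k\in\mathbb{Z}}|x_k(t)-c_k|\to0$ as $t\to\infty$. For nonnegative functions, $a(t)=O(b(t))$ as $t\to\infty$ means there is $C>0$ with $a(t)\le Cb(t)$ for all sufficiently large $t$; similarly for sequences. *)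

From Stdlib Require Import Reals Lra Lia ZArith.
Open Scope R_scope.

Definition Cx := (R * R)%type.
Definition Cre (z : Cx) : R := fst z.
Definition Cim (z : Cx) : R := snd z.
Definition Cadd (z w : Cx) : Cx := (fst z + fst w, snd z + snd w).
Definition Csub (z w : Cx) : Cx := (fst z - fst w, snd z - snd w).
Definition Cscal (a : R) (z : Cx) : Cx := (a * fst z, a * snd z).
Definition Cmod (z : Cx) : R := sqrt (fst z ^ 2 + snd z ^ 2).

Fixpoint csum1 (f : nat -> Cx) (n : nat) : Cx :=
  match n with
  | O => (0, 0)
  | S m => Cadd (csum1 f m) (f (S m))
  end.

Definition bounded_seq (x0 : Z -> Cx) : Prop :=
  exists M : R, forall k : Z, Cmod (x0 k) <= M.

(* x is the solution x(t) = exp(t(S-I)) x0, written out: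
   x_k(t) = sum_{j>=0} e^{-t} t^j / j! * x_{k-j}(0)   (for t >= 0). *)
Definition is_solution (x0 : Z -> Cx) (x : Z -> R -> Cx) : Prop :=
  forall (k : Z) (t : R), 0 <= t ->
    infinite_sum (fun j => exp (- t) * t ^ j / INR (fact j) * Cre (x0 (k - Z.of_nat j)%Z))
                 (Cre (x k t)) /\
    infinite_sum (fun j => exp (- t) * t ^ j / INR (fact j) * Cim (x0 (k - Z.of_nat j)%Z))
                 (Cim (x k t)).

Definition good (x0 : Z -> Cx) (x : Z -> R -> Cx) : Prop :=
  exists c : Z -> Cx, forall eps : R, 0 < eps ->
    exists T : R, forall t : R, T <= t -> forall k : Z, Cmod (Csub (x k t) (c k)) <= eps.

(* x_k(t) - c is the Poisson mean sum_j e^-t t^j/j! (x_{k-j}(0) - c), and the Cesaro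
   hypothesis says exactly that the partial sums of the deviations x_{k-j}(0) - c are
   bounded uniformly in k.  By Abel summation a Poisson mean of a sequence with partial
   sums bounded by B is at most B e^-t (max weight + total variation of the weights),
   and the total variation of the weights t^j/j! is at most e^t / sqrt t: by AM-GM each
   step |w_j - w_{j+1}| = w_j/(j+1) |j+1-t| is dominated by the increment of the
   potential (sum_{i<=j} w_i + w_j (t-j-1)/2) / sqrt t. *)

From Stdlib Require Import Reals ZArith Lra Lia.
Open Scope R_scope.

Lemma Un_cv_const (a : R) : Un_cv (fun _ => a) a.
Proof.
  intros e He; exists 0%nat; intros n _.
  unfold R_dist; rewrite Rminus_diag, Rabs_R0; lra.
Qed.

Lemma Rabs_le_sqr_plus_sqr_div (u s : R) : 0 < s -> Rabs u <= (u * u + s * s) / (2 * s).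
Proof.
  intros hs. apply (Rmult_le_reg_r (2 * s)); [lra|].
  unfold Rdiv; rewrite Rmult_assoc, Rinv_l, Rmult_1_r by lra.
  assert (Hu : Rabs u * Rabs u = u * u)
    by (rewrite <- Rabs_mult; apply Rabs_right; apply Rle_ge, Rle_0_sqr).
  pose proof (Rle_0_sqr (Rabs u - s)) as Hsq; unfold Rsqr in Hsq.
  nra.
Qed.

Fixpoint variation (w : nat -> R) (n : nat) : R :=
  match n with
  | O => 0
  | S m => variation w m + Rabs (w m - w (S m))
  end.

Lemma variation_le_telescope (w Phi : nat -> R) :
  (forall n, Rabs (w n - w (S n)) <= Phi (S n) - Phi n) ->
  forall n, variation w n <= Phi n - Phi 0%nat.
Proof.
  intros Hstep n; induction n as [|n IH]; simpl.
  - lra.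
  - pose proof (Hstep n); lra.
Qed.

(* Summation by parts: sum_{j<=n} w_j a_j = w_n A_n + sum_{j<n} A_j (w_j - w_{j+1}). *)
Lemma abel_sum_bound (w a : nat -> R) (B : R) :
  (forall n, Rabs (sum_f_R0 a n) <= B) ->
  forall n, Rabs (sum_f_R0 (fun j => w j * a j) n) <= B * (Rabs (w n) + variation w n).
Proof.
  intros HB n.
  assert (Hparts : Rabs (sum_f_R0 (fun j => w j * a j) n - w n * sum_f_R0 a n)
                   <= B * variation w n).
  { induction n as [|n IH]; simpl.
    - rewrite Rminus_diag, Rabs_R0; lra.
    - replace (sum_f_R0 (fun j => w j * a j) n + w (S n) * a (S n)
               - w (S n) * (sum_f_R0 a n + a (S n)))
        with ((sum_f_R0 (fun j => w j * a j) n - w n * sum_f_R0 a n)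
              + sum_f_R0 a n * (w n - w (S n))) by ring.
      eapply Rle_trans; [apply Rabs_triang|].
      rewrite Rabs_mult, Rmult_plus_distr_l.
      apply Rplus_le_compat; [exact IH|].
      apply Rmult_le_compat_r; [apply Rabs_pos | apply HB]. }
  replace (sum_f_R0 (fun j => w j * a j) n)
    with ((sum_f_R0 (fun j => w j * a j) n - w n * sum_f_R0 a n) + w n * sum_f_R0 a n)
    by ring.
  eapply Rle_trans; [apply Rabs_triang|].
  rewrite Rabs_mult.
  assert (Rabs (w n) * Rabs (sum_f_R0 a n) <= Rabs (w n) * B)
    by (apply Rmult_le_compat_l; [apply Rabs_pos | apply HB]).
  lra.
Qed.

Section PoissonWeights.
Variable t : R.

Definition pweight (n : nat) : R := t ^ n / INR (fact n).

Definition pweight_sum (n : nat) : R := sum_f_R0 pweight n.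

Definition pweight_potential (n : nat) : R :=
  (pweight_sum n + pweight n * (t - INR n - 1) / 2) / sqrt t.

Lemma pweight_S n : pweight (S n) = pweight n * t / (INR n + 1).
Proof.
  unfold pweight; rewrite fact_simpl, mult_INR, <- S_INR; simpl pow.
  field; split; [apply INR_fact_neq_0 | apply not_0_INR; lia].
Qed.

Lemma pweight_sum_cv : Un_cv pweight_sum (exp t).
Proof.
  unfold exp; destruct (exist_exp t) as [l Hl]; simpl.
  apply Un_cv_ext with (fun n => sum_f_R0 (fun i => / INR (fact i) * t ^ i) n); [|exact Hl].
  intro n; apply sum_eq; intros; unfold pweight, Rdiv; ring.
Qed.

Lemma pweight_tail_cv : Un_cv (fun n => pweight n * (t - INR n - 1)) 0.
Proof.
  apply CV_shift with 1%nat.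
  apply Un_cv_ext with (fun n => t * pweight (n + 1) - t * pweight n - pweight (n + 1)).
  { intro n; rewrite Nat.add_1_r, pweight_S, S_INR.
    field; pose proof (pos_INR n); lra. }
  replace 0 with (t * 0 - t * 0 - 0) by ring.
  pose proof (CV_shift' _ 1 _ (cv_speed_pow_fact t)) as Hshift.
  apply CV_minus; [apply CV_minus|]; try exact Hshift;
    apply CV_mult; try apply Un_cv_const; try exact Hshift; exact (cv_speed_pow_fact t).
Qed.

Lemma pweight_potential_cv : Un_cv pweight_potential (exp t / sqrt t).
Proof.
  unfold pweight_potential, Rdiv.
  replace (exp t * / sqrt t) with ((exp t + 0 * / 2) * / sqrt t) by ring.
  apply (CV_mult _ (fun _ => / sqrt t)); [|apply Un_cv_const].
  apply CV_plus; [exact pweight_sum_cv|].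
  apply (CV_mult _ (fun _ => / 2)); [exact pweight_tail_cv | apply Un_cv_const].
Qed.

Hypothesis t_pos : 0 < t.

Lemma pweight_ge0 n : 0 <= pweight n.
Proof.
  unfold pweight; apply Rmult_le_pos; [apply pow_le; lra|].
  apply Rlt_le, Rinv_0_lt_compat, INR_fact_lt_0.
Qed.

Lemma pweight_step_le_potential n :
  Rabs (pweight n - pweight (S n)) <= pweight_potential (S n) - pweight_potential n.
Proof.
  set (s := sqrt t); set (Q := pweight n); set (u := INR n + 1).
  assert (hs : 0 < s) by (apply sqrt_lt_R0; lra).
  assert (hss : s * s = t) by (apply sqrt_sqrt; lra).
  assert (hu : 0 < u) by (pose proof (pos_INR n); unfold u; lra).
  assert (hQu : 0 <= Q / u)
    by (apply Rmult_le_pos; [apply pweight_ge0 | apply Rlt_le, Rinv_0_lt_compat; lra]).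
  assert (Hstep : Q - pweight (S n) = Q / u * (u - t))
    by (rewrite pweight_S; fold Q u; field; lra).
  assert (Hpot : pweight_potential (S n) - pweight_potential n
                 = Q / u * (((u - t) * (u - t) + s * s) / (2 * s))).
  { unfold pweight_potential, pweight_sum; rewrite tech5, pweight_S, S_INR.
    fold (pweight_sum n) s Q u; rewrite hss.
    replace (INR n) with (u - 1) by (unfold u; ring); field; lra. }
  rewrite Hstep, Hpot, Rabs_mult, (Rabs_right (Q / u)) by lra.
  apply Rmult_le_compat_l; [exact hQu|].
  apply Rabs_le_sqr_plus_sqr_div; exact hs.
Qed.

Lemma pweight_variation_le n : variation pweight n <= pweight_potential n.
Proof.
  eapply Rle_trans; [apply variation_le_telescope, pweight_step_le_potential|].
  assert (0 <= pweight_potential 0).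
  { unfold pweight_potential, pweight_sum, pweight; simpl.
    apply Rmult_le_pos; [lra | apply Rlt_le, Rinv_0_lt_compat, sqrt_lt_R0; lra]. }
  lra.
Qed.

End PoissonWeights.

Lemma poisson_mean_bound (t : R) (a : nat -> R) (B L : R) :
  0 < t ->
  (forall n, Rabs (sum_f_R0 a n) <= B) ->
  infinite_sum (fun j => exp (- t) * t ^ j / INR (fact j) * a j) L ->
  Rabs L <= B / sqrt t.
Proof.
  intros ht HB HL.
  assert (hB : 0 <= B) by (eapply Rle_trans; [apply Rabs_pos | apply (HB 0%nat)]).
  pose proof (exp_pos (- t)) as he.
  apply (Rle_cv_lim
           (Un := fun n => Rabs (sum_f_R0 (fun j => exp (- t) * t ^ j / INR (fact j) * a j) n))
           (Vn := fun n => exp (- t) * B * (pweight t n + pweight_potential t n))).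
  - intro n.
    rewrite (sum_eq _ (fun j => pweight t j * a j * exp (- t)))
      by (intros; unfold pweight, Rdiv; ring).
    rewrite <- scal_sum, Rabs_mult, (Rabs_right (exp (- t))), Rmult_assoc by lra.
    apply Rmult_le_compat_l; [lra|].
    eapply Rle_trans; [apply abel_sum_bound, HB|].
    rewrite (Rabs_right (pweight t n)) by (apply Rle_ge, pweight_ge0; lra).
    apply Rmult_le_compat_l; [exact hB|].
    pose proof (pweight_variation_le t ht n); lra.
  - apply cv_cvabs; exact HL.
  - replace (B / sqrt t) with (exp (- t) * B * (0 + exp t / sqrt t)).
    + apply (CV_mult (fun _ => exp (- t) * B)); [apply Un_cv_const|].
      apply CV_plus; [exact (cv_speed_pow_fact t) | exact (pweight_potential_cv t)].
    + rewrite exp_Ropp; field.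
      split; [apply Rgt_not_eq, sqrt_lt_R0; lra | apply Rgt_not_eq, exp_pos].
Qed.

Lemma poisson_weights_sum (t : R) :
  infinite_sum (fun j => exp (- t) * t ^ j / INR (fact j)) 1.
Proof.
  apply Un_cv_ext with (fun n => exp (- t) * pweight_sum t n).
  { intro n; unfold pweight_sum; rewrite scal_sum.
    apply sum_eq; intros; unfold pweight, Rdiv; ring. }
  replace 1 with (exp (- t) * exp t) by (rewrite <- exp_plus, Rplus_opp_l; apply exp_0).
  apply (CV_mult (fun _ => exp (- t))); [apply Un_cv_const | apply pweight_sum_cv].
Qed.

Lemma poisson_mean_dev_bound (t : R) (a : nat -> R) (g B L : R) :
  0 < t ->
  (forall n, Rabs (sum_f_R0 (fun j => a j - g) n) <= B) ->
  infinite_sum (fun j => exp (- t) * t ^ j / INR (fact j) * a j) L ->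
  Rabs (L - g) <= B / sqrt t.
Proof.
  intros ht HB HL.
  apply (poisson_mean_bound t (fun j => a j - g)); [exact ht | exact HB|].
  assert (Hg : infinite_sum (fun j => exp (- t) * t ^ j / INR (fact j) * g) g).
  { assert (Hw : Un_cv (fun n => sum_f_R0 (fun j => exp (- t) * t ^ j / INR (fact j)) n * g)
                      (1 * g))
      by (apply (CV_mult _ (fun _ => g)); [apply poisson_weights_sum | apply Un_cv_const]).
    rewrite Rmult_1_l in Hw.
    apply (Un_cv_ext _ _ (fun n => Rmult_comm _ _) _) in Hw.
    apply (Un_cv_ext _ _ (fun n => scal_sum _ n g) _ Hw). }
  apply Un_cv_ext with
    (fun n => sum_f_R0 (fun j => exp (- t) * t ^ j / INR (fact j) * a j) n
              - sum_f_R0 (fun j => exp (- t) * t ^ j / INR (fact j) * g) n).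
  { intro n; rewrite <- minus_sum; apply sum_eq; intros; ring. }
  apply CV_minus; [exact HL | exact Hg].
Qed.

Lemma partial_sums_bounded (d : nat -> R) (M C : R) (N : nat) :
  (forall j, Rabs (d j) <= M) ->
  (forall n, (N <= n)%nat -> Rabs (sum_f_R0 d n - d 0%nat) <= C) ->
  forall n, Rabs (sum_f_R0 d n) <= M + C + INR N * M.
Proof.
  intros HM HC n.
  assert (hM : 0 <= M) by (eapply Rle_trans; [apply Rabs_pos | apply (HM 0%nat)]).
  assert (hC : 0 <= C) by (eapply Rle_trans; [apply Rabs_pos | apply (HC N), Nat.le_refl]).
  assert (hNM : 0 <= INR N * M) by (apply Rmult_le_pos; [apply pos_INR | exact hM]).
  destruct (le_lt_dec N n) as [HNn | HnN].
  - replace (sum_f_R0 d n) with (d 0%nat + (sum_f_R0 d n - d 0%nat)) by ring.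
    eapply Rle_trans; [apply Rabs_triang|].
    pose proof (HM 0%nat); pose proof (HC n HNn); lra.
  - assert (Hlin : forall m, Rabs (sum_f_R0 d m) <= (INR m + 1) * M).
    { induction m as [|m IH]; simpl sum_f_R0.
      - simpl INR; pose proof (HM 0%nat); lra.
      - rewrite S_INR; eapply Rle_trans; [apply Rabs_triang|].
        pose proof (HM (S m)); lra. }
    assert (INR n + 1 <= INR N) by (rewrite <- S_INR; apply le_INR; lia).
    assert ((INR n + 1) * M <= INR N * M) by (apply Rmult_le_compat_r; lra).
    pose proof (Hlin n); lra.
Qed.

Lemma Rabs_Cre_le_Cmod (z : Cx) : Rabs (Cre z) <= Cmod z.
Proof.
  unfold Cmod, Cre; rewrite <- sqrt_Rsqr_abs; apply sqrt_le_1_alt.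
  unfold Rsqr; simpl; pose proof (pow2_ge_0 (snd z)); simpl in *; lra.
Qed.

Lemma Rabs_Cim_le_Cmod (z : Cx) : Rabs (Cim z) <= Cmod z.
Proof.
  unfold Cmod, Cim; rewrite <- sqrt_Rsqr_abs; apply sqrt_le_1_alt.
  unfold Rsqr; simpl; pose proof (pow2_ge_0 (fst z)); simpl in *; lra.
Qed.

Lemma Cmod_le_Rabs_Cre_Cim (z : Cx) : Cmod z <= Rabs (Cre z) + Rabs (Cim z).
Proof.
  unfold Cmod, Cre, Cim.
  pose proof (Rabs_pos (fst z)); pose proof (Rabs_pos (snd z)).
  rewrite <- (sqrt_Rsqr (Rabs (fst z) + Rabs (snd z))) by lra.
  apply sqrt_le_1_alt; unfold Rsqr.
  rewrite <- (pow2_abs (fst z)), <- (pow2_abs (snd z)); nra.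
Qed.

Section Component.
Variable pr : Cx -> R.
Hypothesis pr_add : forall z w, pr (Cadd z w) = pr z + pr w.
Hypothesis pr_scal : forall a z, pr (Cscal a z) = a * pr z.
Hypothesis pr_le_Cmod : forall z, Rabs (pr z) <= Cmod z.

Lemma pr_sub (z w : Cx) : pr (Csub z w) = pr z - pr w.
Proof.
  replace (Csub z w) with (Cadd z (Cscal (-1) w))
    by (unfold Csub, Cadd, Cscal; simpl; f_equal; ring).
  rewrite pr_add, pr_scal; ring.
Qed.

Lemma pr_csum1 (f : nat -> Cx) (g : R) (n : nat) :
  pr (csum1 f n) - INR n * g = sum_f_R0 (fun j => pr (f j) - g) n - (pr (f 0%nat) - g).
Proof.
  induction n as [|n IH]; simpl csum1.
  - replace (0, 0) with (Cscal 0 (0, 0)) by (unfold Cscal; f_equal; ring).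
    rewrite pr_scal; simpl; ring.
  - rewrite pr_add, tech5, S_INR; lra.
Qed.

Lemma pr_dev_partial_sums_bounded (x0 : Z -> Cx) (c : Cx) (M C0 : R) (N : nat) :
  (forall k, Cmod (x0 k) <= M) ->
  0 < C0 ->
  (forall n : nat, (N <= n)%nat -> (1 <= n)%nat -> forall k : Z,
     Cmod (Csub (Cscal (/ INR n) (csum1 (fun j => x0 (k - Z.of_nat j)%Z) n)) c)
       <= C0 * / INR n) ->
  exists B, forall (k : Z) (n : nat),
    Rabs (sum_f_R0 (fun j => pr (x0 (k - Z.of_nat j)%Z) - pr c) n) <= B.
Proof.
  intros HM HC0 Hces.
  exists ((M + Rabs (pr c)) + C0 + INR N * (M + Rabs (pr c))); intro k.
  apply partial_sums_bounded.
  - intro j; eapply Rle_trans; [apply Rabs_triang|]; rewrite Rabs_Ropp.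
    pose proof (pr_le_Cmod (x0 (k - Z.of_nat j)%Z)); pose proof (HM (k - Z.of_nat j)%Z); lra.
  - intros [|n] HNn.
    + simpl; rewrite Rminus_diag, Rabs_R0; lra.
    + set (f := fun j => x0 (k - Z.of_nat j)%Z).
      rewrite <- (pr_csum1 f).
      assert (hn : 0 < INR (S n)) by (apply lt_0_INR; lia).
      replace (pr (csum1 f (S n)) - INR (S n) * pr c)
        with (INR (S n) * pr (Csub (Cscal (/ INR (S n)) (csum1 f (S n))) c))
        by (rewrite pr_sub, pr_scal; field; lra).
      rewrite Rabs_mult, Rabs_right by lra.
      replace C0 with (INR (S n) * (C0 * / INR (S n))) by (field; lra).
      apply Rmult_le_compat_l; [lra|].
      eapply Rle_trans; [apply pr_le_Cmod | apply Hces; lia].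
Qed.

End Component.

Theorem theorem2 (x0 : Z -> Cx) (x : Z -> R -> Cx) (c : Cx) :
  bounded_seq x0 ->
  is_solution x0 x ->
  good x0 x ->
  (exists C0 : R, 0 < C0 /\ exists N : nat, forall n : nat, (N <= n)%nat -> (1 <= n)%nat ->
     forall k : Z,
       Cmod (Csub (Cscal (/ INR n) (csum1 (fun j => x0 (k - Z.of_nat j)%Z) n)) c)
         <= C0 * / INR n) ->
  exists C1 : R, 0 < C1 /\ exists T : R, forall t : R, T <= t -> 0 < t ->
    forall k : Z, Cmod (Csub (x k t) c) <= C1 * / sqrt t.
Proof.
  intros [M HM] Hsol _ [C0 [HC0 [N Hces]]].
  destruct (pr_dev_partial_sums_bounded Cre (fun _ _ => eq_refl) (fun _ _ => eq_refl)
              Rabs_Cre_le_Cmod x0 c M C0 N HM HC0 Hces) as [Bre Hre].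
  destruct (pr_dev_partial_sums_bounded Cim (fun _ _ => eq_refl) (fun _ _ => eq_refl)
              Rabs_Cim_le_Cmod x0 c M C0 N HM HC0 Hces) as [Bim Him].
  assert (0 <= Bre) by (eapply Rle_trans; [apply Rabs_pos | apply (Hre 0%Z 0%nat)]).
  assert (0 <= Bim) by (eapply Rle_trans; [apply Rabs_pos | apply (Him 0%Z 0%nat)]).
  exists (Bre + Bim + 1); split; [lra|]; exists 0; intros t _ ht k.
  destruct (Hsol k t (Rlt_le _ _ ht)) as [Hxre Hxim].
  pose proof (poisson_mean_dev_bound t _ _ _ _ ht (Hre k) Hxre) as Hre_t.
  pose proof (poisson_mean_dev_bound t _ _ _ _ ht (Him k) Hxim) as Him_t.
  assert (0 < / sqrt t) by (apply Rinv_0_lt_compat, sqrt_lt_R0; exact ht).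
  eapply Rle_trans; [apply Cmod_le_Rabs_Cre_Cim|].
  unfold Rdiv in Hre_t, Him_t; simpl; fold (Cre (x k t)) (Cim (x k t)) (Cre c) (Cim c).
  nra.
Qed.
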